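(* Let $H$ be a separable complex Hilbert space, let $\mathcal{U}$ be a unitary system on $H$, let $\psi,\eta\in\mathcal{W}(\mathcal{U})$, and let $V$ be the unique unitary operator in the local commutant $\mathcal{C}_\psi(\mathcal{U})$ with $V\psi=\eta$. Suppose that for some $0<\alpha<\frac{\pi}{2}$ the vector $\rho:=\cos\alpha\cdot\psi+i\sin\alpha\cdot\eta$ belongs to $\mathcal{W}(\mathcal{U})$. Then $V^2=I$.
   Context: A unitary system on $H$ is a collection $\mathcal{U}$ of unitary operators on $H$ containing the identity operator. A vector $\psi\in H$ is a complete wandering vector for $\mathcal{U}$ if $\{U\psi:U\in\mathcal{U}\}$ is an orthonormal set (distinct elements of $\mathcal{U}$ giving orthogonal vectors) whose closed linear span is $H$; $\mathcal{W}(\mathcal{U})$ denotes the set of such vectors. The local commutant of $\mathcal{U}$ at $\psi$ is $\mathcal{C}_\psi(\mathcal{U}):=\{A\in B(H): (AU-UA)\psi=0 \text{ for all } U\in\mathcal{U}\}$. For $\psi,\eta\in\mathcal{W}(\mathcal{U})$ there is exactly one unitary $V\in\mathcal{C}_\psi(\mathcal{U})$ with $V\psi=\eta$, namely the unitary with $V(U\psi)=U\eta$ for all $U\in\mathcal{U}$. *)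

From mathcomp Require Import all_boot all_order all_algebra.
From Stdlib Require Lists.List.
From mathcomp Require Import reals trigo.
From mathcomp Require Export complex.
Set Implicit Arguments.
Unset Strict Implicit.
Unset Printing Implicit Defensive.
Import Order.TTheory GRing.Theory Num.Theory.
Local Open Scope ring_scope.
Local Open Scope complex_scope.

Section Hilbert.
Variables (R : realType) (H : lmodType R[i]) (ip : H -> H -> R[i]).

Definition inner_product_axioms : Prop :=
  [/\ (forall (a : R[i]) (x y z : H), ip (a *: x + y) z = a * ip x z + ip y z),
      (forall x y : H, ip y x = (ip x y)^*),
      (forall x : H, 0 <= ip x x) &
      (forall x : H, ip x x = 0 -> x = 0)].

Definition hnorm (x : H) : R := Num.sqrt (complex.Re (ip x x)).

Definition hcomplete : Prop :=
  forall u : nat -> H,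
    (forall e : R, 0 < e -> exists N : nat, forall m n : nat,
        (N <= m)%N -> (N <= n)%N -> hnorm (u m - u n) < e) ->
    exists l : H, forall e : R, 0 < e -> exists N : nat, forall n : nat,
        (N <= n)%N -> hnorm (u n - l) < e.

Definition hseparable : Prop :=
  exists d : nat -> H, forall (x : H) (e : R), 0 < e ->
    exists n : nat, hnorm (x - d n) < e.

Definition separable_hilbert_space : Prop :=
  [/\ inner_product_axioms, hcomplete & hseparable].

Definition is_linear_op (A : H -> H) : Prop :=
  forall (a : R[i]) (x y : H), A (a *: x + y) = a *: A x + A y.

Definition bounded_op (A : H -> H) : Prop :=
  is_linear_op A /\ exists M : R, forall x : H, hnorm (A x) <= M * hnorm x.

Definition unitary_op (U : H -> H) : Prop :=
  bounded_op U /\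
  exists Ustar : H -> H,
    [/\ (forall x y : H, ip (U x) y = ip x (Ustar y)),
        (forall x : H, Ustar (U x) = x) &
        (forall x : H, U (Ustar x) = x)].

Definition unitary_system (UU : (H -> H) -> Prop) : Prop :=
  (forall U, UU U -> unitary_op U) /\ UU id.

(* psi is a complete wandering vector for UU: {U psi : U in UU} is an
   orthonormal set (distinct elements giving orthogonal vectors) whose
   closed linear span is H *)
Definition complete_wandering (UU : (H -> H) -> Prop) (psi : H) : Prop :=
  [/\ (forall U, UU U -> ip (U psi) (U psi) = 1),
      (forall U1 U2, UU U1 -> UU U2 -> U1 <> U2 -> ip (U1 psi) (U2 psi) = 0) &
      (forall (x : H) (e : R), 0 < e ->
         exists s : seq (R[i] * (H -> H)),
           (forall p, Stdlib.Lists.List.In p s -> UU p.2) /\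
           hnorm (x - \sum_(p <- s) p.1 *: p.2 psi) < e)].

Definition local_commutant (UU : (H -> H) -> Prop) (psi : H) (A : H -> H) : Prop :=
  bounded_op A /\ forall U, UU U -> A (U psi) - U (A psi) = 0.

End Hilbert.

From mathcomp Require Import all_boot all_order all_algebra.
From mathcomp Require Import reals trigo complex.
From mathcomp Require Import ring lra.
From Stdlib Require Import Classical.
Set Implicit Arguments.
Unset Strict Implicit.
Unset Printing Implicit Defensive.
Import Order.TTheory GRing.Theory Num.Theory.
Local Open Scope ring_scope.
Local Open Scope complex_scope.

(* All three of psi, eta and rho = cos a psi + i sin a eta have the Kronecker
   Gram matrix <U phi, W phi> = delta_UW.  Expanding <U rho, W rho> therefore
   leaves cos a sin a (<U eta, W psi> - <U psi, W eta>) = 0.  Since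
   V (U psi) = U eta, this says <V (U psi), W psi> = <U psi, V (W psi)>; as the
   vectors U psi span a dense subspace, V^* = V, and a self-adjoint unitary is
   an involution. *)

Lemma conjc_iR (R : rcfType) (y : R) : ('i * y%:C)^* = - ('i * y%:C).
Proof. by apply/eqP; rewrite eq_complex /=; apply/andP; split; apply/eqP; ring. Qed.

Lemma real_imaginary_sqrB (R : rcfType) (x y : R) :
  x%:C * x%:C - ('i * y%:C) * ('i * y%:C) = (x ^+ 2 + y ^+ 2)%:C.
Proof. by apply/eqP; rewrite eq_complex /=; apply/andP; split; apply/eqP; ring. Qed.

Section LinearOp.
Variables (R : realType) (H : lmodType R[i]) (A : H -> H).
Hypothesis linA : is_linear_op A.

Lemma linear_op0 : A 0 = 0.
Proof.
have A00 := linA 1 0 0; rewrite scale1r addr0 scale1r in A00.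
by apply/(addrI (A 0)); rewrite addr0 -A00.
Qed.

Lemma linear_opZ a x : A (a *: x) = a *: A x.
Proof. by rewrite -[a *: x]addr0 linA linear_op0 addr0. Qed.

End LinearOp.

Section Hilbert.
Variables (R : realType) (H : lmodType R[i]) (ip : H -> H -> R[i]).
Hypothesis ip_axioms : inner_product_axioms ip.

Lemma ipC x y : ip y x = (ip x y)^*.
Proof. by case: ip_axioms. Qed.

Lemma ipDl x y z : ip (x + y) z = ip x z + ip y z.
Proof. by case: ip_axioms => ipl _ _ _; have := ipl 1 x y z; rewrite scale1r mul1r. Qed.

Lemma ip0l z : ip 0 z = 0.
Proof. by apply/(addrI (ip 0 z)); rewrite -ipDl !addr0. Qed.

Lemma ipZl a x z : ip (a *: x) z = a * ip x z.
Proof. by case: ip_axioms => ipl _ _ _; have := ipl a x 0 z; rewrite !addr0 ip0l addr0. Qed.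

Lemma ipBl x y z : ip (x - y) z = ip x z - ip y z.
Proof. by rewrite -scaleN1r ipDl ipZl mulN1r. Qed.

Lemma ipDr x y z : ip z (x + y) = ip z x + ip z y.
Proof. by rewrite ipC ipDl rmorphD /= -!ipC. Qed.

Lemma ipZr a x z : ip z (a *: x) = conjc a * ip z x.
Proof. by rewrite ipC ipZl rmorphM /= -ipC. Qed.

Lemma ipBr x y z : ip z (x - y) = ip z x - ip z y.
Proof. by rewrite ipC ipBl rmorphB /= -!ipC. Qed.

Lemma ip_adjointC (V Vs : H -> H) :
  (forall x y, ip (V x) y = ip x (Vs y)) -> forall x y, ip (Vs x) y = ip x (V y).
Proof. by move=> adjV x y; rewrite ipC -adjV -ipC. Qed.

Lemma Re_ip_ge0 x : 0 <= complex.Re (ip x x).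
Proof. by case: ip_axioms => _ _ ipp _; move: (ipp x); rewrite lecE => /andP[]. Qed.

Lemma Re_ip_le_hnorm_subr x t : ip t x = 0 ->
  complex.Re (ip x x) <= hnorm ip (x - t) ^+ 2.
Proof.
move=> tx; have xt : ip x t = 0 by rewrite ipC tx conjc0.
rewrite /hnorm; have -> : ip (x - t) (x - t) = ip x x + ip t t.
  by rewrite ipBl !ipBr tx xt subr0 sub0r opprK.
by rewrite raddfD sqr_sqrtr ?addr_ge0 ?Re_ip_ge0 //= lerDl Re_ip_ge0.
Qed.

Lemma approx_orthogonal_eq0 x :
  (forall e : R, 0 < e -> exists t, ip t x = 0 /\ hnorm ip (x - t) < e) -> x = 0.
Proof.
move=> approx.
have Re_small e : 0 < e -> complex.Re (ip x x) < e ^+ 2.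
  move=> /approx [t [tx close]]; have := Re_ip_le_hnorm_subr tx.
  have := sqrtr_ge0 (complex.Re (ip (x - t) (x - t))); rewrite -/(hnorm ip _).
  nra.
have Re0 : complex.Re (ip x x) = 0.
  apply/eqP; rewrite eq_le Re_ip_ge0 andbT leNgt; apply/negP => Re_gt0.
  by have := Re_small _ Re_gt0; have := Re_small 1 ltr01; nra.
case: ip_axioms => _ _ ipp ipd; apply: ipd.
by rewrite (complexE (ip x x)) Re0 (ger0_Im (ipp x)) mulr0 addr0.
Qed.

Variable UU : (H -> H) -> Prop.

Lemma complete_wandering_orthogonal_eq0 psi y : complete_wandering ip UU psi ->
  (forall W, UU W -> ip y (W psi) = 0) -> y = 0.
Proof.
move=> [_ _ dense] orth; apply: approx_orthogonal_eq0 => e /(dense y)[s [inUU close]].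
exists (\sum_(p <- s) p.1 *: p.2 psi); split => //.
elim: s inUU {close} => [|p s IH] inUU; first by rewrite big_nil ip0l.
rewrite big_cons ipDl ipZl IH => [|q sq]; last by apply: inUU; right.
by rewrite ipC orth ?conjc0 ?mulr0 ?addr0 //; apply: inUU; left.
Qed.

Lemma complete_wandering_ip_inj psi x y : complete_wandering ip UU psi ->
  (forall W, UU W -> ip x (W psi) = ip y (W psi)) -> x = y.
Proof.
move=> psiW E; apply/subr0_eq/(complete_wandering_orthogonal_eq0 psiW) => W UW.
by rewrite ipBl E // subrr.
Qed.

Lemma adjoint_eq_on_complete_wandering psi (V Vs : H -> H) :
  complete_wandering ip UU psi -> (forall x y, ip (V x) y = ip x (Vs y)) ->
  (forall W, UU W -> Vs (W psi) = V (W psi)) -> forall x, Vs x = V x.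
Proof.
move=> psiW adjV VsV x; apply: (complete_wandering_ip_inj psiW) => W UW.
by rewrite (ip_adjointC adjV) -VsV // adjV.
Qed.

Lemma complete_wandering_gram phi chi U W :
  complete_wandering ip UU phi -> complete_wandering ip UU chi -> UU U -> UU W ->
  ip (U phi) (W phi) = ip (U chi) (W chi).
Proof.
move=> [phi1 phi0 _] [chi1 chi0 _] UUU UUW.
by case: (classic (U = W)) => [<-|neUW]; [rewrite phi1 ?chi1 | rewrite phi0 ?chi0].
Qed.

Lemma local_commutant_translate psi eta V U :
  local_commutant ip UU psi V -> V psi = eta -> UU U -> V (U psi) = U eta.
Proof. by move=> [_ comm] <- UUU; apply/subr0_eq/comm. Qed.

Hypothesis UUsys : unitary_system ip UU.

Lemma unitary_system_linear U : UU U -> is_linear_op U.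
Proof. by move=> /UUsys.1 [[]]. Qed.

Lemma complete_wandering_rotation_sym (x y : R) psi eta U W :
  x ^+ 2 + y ^+ 2 = 1 -> x != 0 -> y != 0 ->
  complete_wandering ip UU psi -> complete_wandering ip UU eta ->
  complete_wandering ip UU (x%:C *: psi + ('i * y%:C) *: eta) -> UU U -> UU W ->
  ip (U eta) (W psi) = ip (U psi) (W eta).
Proof.
set c := x%:C; set d := 'i * y%:C => xy1 x_neq0 y_neq0 psiW etaW rhoW UUU UUW.
have cd_neq0 : c * d != 0.
  by rewrite !mulf_neq0 ?fmorph_eq0 // eq_complex /= oner_eq0 andbF.
have linU := unitary_system_linear UUU; have linW := unitary_system_linear UUW.
have := complete_wandering_gram rhoW psiW UUU UUW.
rewrite linU linW !(linear_opZ linU) !(linear_opZ linW) !ipDl !ipZl !ipDr !ipZr.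
rewrite conjc_real conjc_iR -/c -/d -(complete_wandering_gram psiW etaW UUU UUW).
set A := ip (U psi) (W psi); set P := ip (U psi) (W eta); set Q := ip (U eta) (W psi).
move=> E; apply/eqP; rewrite -subr_eq0; apply/eqP/(mulfI cd_neq0).
(* <U rho, W rho> - (|c|^2 + |d|^2) <U psi, W psi>, written with d^* = - d *)
transitivity (c * (c * A + - d * P) + d * (c * Q + - d * A) - A * (c * c - d * d)).
  by ring.
by rewrite E real_imaginary_sqrB xy1 mulr1 subrr mulr0.
Qed.

End Hilbert.

Theorem proposition5 (R : realType) (H : lmodType R[i]) (ip : H -> H -> R[i])
  (HH : separable_hilbert_space ip)
  (UU : (H -> H) -> Prop) (hUU : unitary_system ip UU)
  (psi eta : H)
  (hpsi : complete_wandering ip UU psi) (heta : complete_wandering ip UU eta)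
  (V : H -> H) (hVu : unitary_op ip V) (hVc : local_commutant ip UU psi V)
  (hVpsi : V psi = eta)
  (alpha : R) (ha0 : 0 < alpha) (ha1 : alpha < pi / 2)
  (hrho : complete_wandering ip UU
            ((cos alpha)%:C *: psi + ('i * (sin alpha)%:C) *: eta)) :
  forall x : H, V (V x) = x.
Proof.
case: HH => ipA _ _; case: hVu => _ [Vs [adjV _ VVs]].
have VU U : UU U -> V (U psi) = U eta := local_commutant_translate hVc hVpsi.
have sym U W : UU U -> UU W -> ip (U eta) (W psi) = ip (U psi) (W eta).
  apply: (complete_wandering_rotation_sym ipA hUU (cos2Dsin2 alpha) _ _ hpsi heta hrho).
    by rewrite gt_eqF // cos_gt0_pihalf // ha1 andbT (lt_trans _ ha0) // oppr_lt0 divr_gt0 ?pi_gt0.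
  by rewrite gt_eqF // sin_gt0_pihalf // ha0 ha1.
have VsW W : UU W -> Vs (W psi) = V (W psi).
  move=> UW; rewrite VU //; apply: (complete_wandering_ip_inj ipA hpsi) => U UUU.
  by rewrite (ip_adjointC ipA adjV) VU // (ipC ipA) sym // -(ipC ipA).
have VsV := adjoint_eq_on_complete_wandering ipA hpsi adjV VsW.
by move=> x; rewrite -[V x]VsV VVs.
Qed.
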